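(* Let $\mathbf X_I=(X_1,\dots,X_d)$ satisfy conditions (i) and (ii) below, and let $I_1,\dots,I_p$ be a partition of $I$. Then for all $(\lambda_1,\dots,\lambda_p)\in(0,\infty)^p$, $$E\Big(\max_{1\le j\le p} M(I_j)^{\lambda_j}\Big)=\frac{L}{1+L},\qquad L=\ell_{\mathbf X_I}\Big(\sigma_1^{\eta}\sum_{j=1}^p\lambda_j^{\eta}\delta_1(I_j),\dots,\sigma_d^{\eta}\sum_{j=1}^p\lambda_j^{\eta}\delta_d(I_j)\Big).$$
   Context: Let $d\ge 1$, $I=\{1,\dots,d\}$, and let $I_1,\dots,I_p$ ($1\le p\le d$) be a partition of $I$ into nonempty blocks of consecutive indices. Let $\mathbf X_I=(X_1,\dots,X_d)$ be a random vector with joint distribution function $F_{\mathbf X_I}$ and univariate marginal distribution functions $F_i$ such that: (i) $F_i(t)=\exp(-\sigma_i t^{-1/\eta})$ for $t>0$, $i=1,\dots,d$, for some constants $\sigma_i>0$ and $\eta\in(0,1]$; (ii) the function $\ell_{\mathbf X_I}(t_1,\dots,t_d)=-\ln F_{\mathbf X_I}(t_1,\dots,t_d)$, $(t_1,\dots,t_d)\in(0,\infty)^d$, is homogeneous of order $-1/\eta$, i.e. $\ell_{\mathbf X_I}(s\mathbf t)=s^{-1/\eta}\ell_{\mathbf X_I}(\mathbf t)$ for all $s>0$. For $i\in I$ and $J\subseteq I$, $\delta_i(J)=1$ if $i\in J$ and $\delta_i(J)=0$ otherwise. For nonempty $J\subseteq I$, $M(J)=\max_{i\in J}F_i(X_i)$.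 *)

From HB Require Import structures.
From mathcomp Require Import all_boot all_order all_algebra.
From mathcomp Require Import all_classical all_reals all_analysis.
Set Implicit Arguments. Unset Strict Implicit. Unset Printing Implicit Defensive.
Import Order.TTheory GRing.Theory Num.Theory.
Local Open Scope classical_set_scope.
Local Open Scope ring_scope.

Definition joint_cdf {dT} {T : measurableType dT} {R : realType}
  (P : probability T R) (n : nat) (X : 'I_n -> T -> R) (t : 'I_n -> R) : R :=
  fine (P [set w | forall i, X i w <= t i]).

Definition marg_cdf {dT} {T : measurableType dT} {R : realType}
  (P : probability T R) (Y : T -> R) (x : R) : R :=
  fine (P [set w | Y w <= x]).

Definition ell {dT} {T : measurableType dT} {R : realType}
  (P : probability T R) (n : nat) (X : 'I_n -> T -> R) (t : 'I_n -> R) : R :=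
  - ln (joint_cdf P X t).

(* M(J) for the block J = blk^-1(j): max_{i in J} F_i(X_i) (pointwise). *)
Definition Mblock {dT} {T : measurableType dT} {R : realType}
  (P : probability T R) (n p : nat) (X : 'I_n -> T -> R) (blk : 'I_n -> 'I_p)
  (j : 'I_p) (w : T) : R :=
  \big[Num.max/0]_(i < n | blk i == j) marg_cdf P (X i) (X i w).

From HB Require Import structures.
From mathcomp Require Import all_boot all_order all_algebra.
From mathcomp Require Import all_classical all_reals all_analysis.
From mathcomp Require Import ring lra measurable_realfun.
Import Order.TTheory GRing.Theory Num.Theory.
Set Implicit Arguments. Unset Strict Implicit. Unset Printing Implicit Defensive.
Local Open Scope classical_set_scope.
Import numFieldNormedType.Exports.
Local Open Scope ring_scope.

(* Let Z be the maximum of the M(I_j)^lam_j.  The margins F_i are continuous and strictly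
   increasing on (0, oo), so Z <= r iff X_i <= t_i for every i, where
   t_i = (- ln r)^(-eta) sigma_i^eta lam_j(i)^eta is the point at which F_i equals
   r^(1/lam_j(i)).  Homogeneity of ell gives P(Z <= r) = exp (- ell t) = r^L on (0, 1), so
   E Z = int_0^1 (1 - r^L) dr = L / (1 + L).  Inverting - ln requires F_X > 0 at positive
   points, which follows from homogeneity and the Bonferroni bound. *)

Section distribution_functions.
Context d (T : measurableType d) (R : realType) (P : probability T R).

Lemma measurable_RV_le (f : {RV P >-> R}) (c : R) : measurable [set w | f w <= c].
Proof.
have := measurable_funP f measurableT _ (measurable_itv `]-oo, c]).
by rewrite setTI; congr measurable; apply/seteqP; split => w /=; rewrite in_itv.
Qed.

Lemma marg_cdfE (f : {RV P >-> R}) (c : R) :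
  P [set w | f w <= c] = (marg_cdf P (fun w => f w) c)%:E.
Proof. by rewrite /marg_cdf fineK// fin_num_measure//; exact: measurable_RV_le. Qed.

Lemma marg_cdf_ge0 (f : T -> R) (c : R) : 0 <= marg_cdf P f c.
Proof. by rewrite /marg_cdf fine_ge0. Qed.

Lemma marg_cdf_le1 (f : {RV P >-> R}) (c : R) : marg_cdf P (fun w => f w) c <= 1.
Proof. by rewrite -lee_fin -marg_cdfE probability_le1//; exact: measurable_RV_le. Qed.

Lemma marg_cdf_nondecreasing (f : {RV P >-> R}) :
  {homo marg_cdf P (fun w => f w) : x y / x <= y}.
Proof.
move=> x y xy; rewrite -lee_fin -!marg_cdfE le_measure// ?inE; try exact: measurable_RV_le.
by move=> w /= /le_trans; apply.
Qed.

Lemma measurable_marg_cdf_RV (f : {RV P >-> R}) :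
  measurable_fun setT (fun w => marg_cdf P (fun w => f w) (f w)).
Proof.
apply: measurableT_comp (measurable_funP f).
apply: nondecreasing_measurable => //; exact: marg_cdf_nondecreasing.
Qed.

Lemma set_gtE (f : T -> R) (c : R) : [set w | c < f w] = ~` [set w | f w <= c].
Proof. by apply/seteqP; split => w /=; rewrite ltNge => /negP. Qed.

Lemma measurable_RV_gt (f : {RV P >-> R}) (c : R) : measurable [set w | c < f w].
Proof. by rewrite set_gtE; exact/measurableC/measurable_RV_le. Qed.

Lemma probability_RV_gt (f : {RV P >-> R}) (c : R) :
  P [set w | c < f w] = (1 - marg_cdf P (fun w => f w) c)%:E.
Proof. by rewrite set_gtE probability_setC ?marg_cdfE//; exact: measurable_RV_le. Qed.

Lemma joint_cdf_ge0 (m : nat) (Y : 'I_m -> T -> R) (t : 'I_m -> R) :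
  0 <= joint_cdf P Y t.
Proof. by rewrite /joint_cdf fine_ge0. Qed.

Variables (n : nat) (X : 'I_n -> {RV P >-> R}).

Lemma measurable_RVs_le (t : 'I_n -> R) : measurable [set w | forall i, X i w <= t i].
Proof.
rewrite (_ : [set w | _] = \bigcap_(i in [set: 'I_n]) [set w | X i w <= t i]).
  by apply: fin_bigcap_measurable => // i _; exact: measurable_RV_le.
by apply/seteqP; split => w /= h i; [move=> _|]; exact: h.
Qed.

Lemma joint_cdfE (t : 'I_n -> R) :
  P [set w | forall i, X i w <= t i] = (joint_cdf P (fun i w => X i w) t)%:E.
Proof. by rewrite /joint_cdf fineK// fin_num_measure//; exact: measurable_RVs_le. Qed.

Lemma joint_cdf_le_marg (t : 'I_n -> R) (i : 'I_n) :
  joint_cdf P (fun i w => X i w) t <= marg_cdf P (fun w => X i w) (t i).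
Proof.
rewrite -lee_fin -joint_cdfE -marg_cdfE le_measure// ?inE.
- exact: measurable_RVs_le.
- exact: measurable_RV_le.
- by move=> w /(_ i).
Qed.

Lemma joint_cdf_ge_bonferroni (t : 'I_n -> R) :
  1 - \sum_(i < n) (1 - marg_cdf P (fun w => X i w) (t i))
    <= joint_cdf P (fun i w => X i w) t.
Proof.
set B := [set w | forall i, X i w <= t i].
pose G (k : nat) := [set w | exists i : 'I_n, (i : nat) = k /\ t i < X i w].
have GE (i : 'I_n) : G i = [set w | t i < X i w].
  apply/seteqP; split => w /=; last by exists i.
  by move=> [j [/val_inj -> ]].
have union_bound : (P (~` B) <= \sum_(i < n) P (G i))%E.
  apply: content_subadditive.
  - by move=> k /= kn; rewrite (GE (Ordinal kn)); exact: measurable_RV_gt.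
  - by apply: measurableC; exact: measurable_RVs_le.
  - move=> w /existsNP [i] /negP; rewrite -ltNge => ?.
    by rewrite -bigcup_mkord; exists (val i); [exact: ltn_ord | exists i].
rewrite (eq_bigr _ (fun i _ => congr1 P (GE i))) in union_bound.
rewrite (eq_bigr _ (fun i _ => probability_RV_gt (X i) (t i))) sumEFin in union_bound.
move: union_bound; rewrite probability_setC; last exact: measurable_RVs_le.
by rewrite joint_cdfE -EFinB lee_fin; lra.
Qed.

End distribution_functions.

Lemma powR_powRN_inv (R : realType) (a e : R) : 0 < a -> 0 < e ->
  (a `^ e) `^ (- e^-1) = a^-1.
Proof.
by move=> a0 e0; rewrite -powRrM mulrN mulfV ?gt_eqF// powR_inv1// ltW.
Qed.

Lemma powRN_powRN_inv (R : realType) (a e : R) : 0 < a -> 0 < e ->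
  (a `^ (- e)) `^ (- e^-1) = a.
Proof.
by move=> a0 e0; rewrite -powRrM mulrNN mulfV ?gt_eqF// powRr1// ltW.
Qed.

Lemma powR_le_powRV (R : realType) (a r l : R) : 0 <= a -> 0 <= r -> 0 < l ->
  (a `^ l <= r) = (a <= r `^ l^-1).
Proof.
move=> a0 r0 l0; have il0 : 0 <= l^-1 by rewrite invr_ge0 ltW.
have nneg_pow (x y : R) : x `^ y \in Num.nneg by rewrite nnegrE powR_ge0.
apply/idP/idP => h.
- have := ge0_ler_powR il0 (nneg_pow a l) (r0 : r \in Num.nneg) h.
  by rewrite -powRrM mulfV ?gt_eqF// powRr1.
- have := ge0_ler_powR (ltW l0) (a0 : a \in Num.nneg) (nneg_pow r l^-1) h.
  by rewrite -powRrM mulVf ?gt_eqF// powRr1.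
Qed.

Lemma frechet_cdf_le (R : realType) (F : R -> R) (s e t x : R) :
  0 < s -> 0 < e -> 0 < t -> {homo F : a b / a <= b} ->
  (forall u, 0 < u -> F u = expR (- (s * u `^ (- e^-1)))) ->
  (F x <= F t) = (x <= t).
Proof.
move=> s0 e0 t0 F_mono F_frechet; apply/idP/idP => [|/F_mono//].
have [x0|x0] := leP x 0; first by move=> _; rewrite (le_trans x0) ?ltW.
rewrite !F_frechet// ler_expR lerN2 ler_pM2l// !powRN lef_pV2 ?posrE ?powR_gt0//.
apply: contraTT; rewrite -!ltNge => tx.
by apply: gt0_ltr_powR; rewrite ?invr_gt0 ?nnegrE ?ltW.
Qed.

Lemma frechet_cdf_at_scaled (R : realType) (s e m r : R) :
  0 < s -> 0 < e -> 0 < m -> 0 < r < 1 ->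
  expR (- (s * ((- ln r) `^ (- e) * (s `^ e * m `^ e)) `^ (- e^-1))) = r `^ m^-1.
Proof.
move=> s0 e0 m0 /andP[r0 r1]; have lnr : 0 < - ln r by rewrite oppr_gt0 ln_lt0 ?r0.
rewrite !powRM ?mulr_ge0 ?powR_ge0 ?ltW//.
rewrite powRN_powRN_inv// !powR_powRN_inv//.
by rewrite /powR gt_eqF//; congr expR; field; rewrite !gt_eqF.
Qed.

Lemma sum_indicator (R : pzSemiRingType) (I : finType) (g : I -> R) (k : I) :
  \sum_(j : I) g j * (k == j)%:R = g k.
Proof.
rewrite (bigD1 k)//= eqxx mulr1 big1 ?addr0// => j.
by rewrite eq_sym => /negbTE ->; rewrite mulr0.
Qed.

Lemma bigmax_ge0 (R : realDomainType) (I : Type) (r : seq I) (Pr : pred I) (f : I -> R) :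
  0 <= \big[Num.max/0]_(i <- r | Pr i) f i.
Proof. by elim/big_rec: _ => // i x _ x0; rewrite le_max x0 orbT. Qed.

Lemma measurable_bigmax d (T : measurableType d) (R : realType) (I : Type)
  (s : seq I) (Pr : pred I) (f : I -> T -> R) :
  (forall i, measurable_fun setT (f i)) ->
  measurable_fun setT (fun w => \big[Num.max/0]_(i <- s | Pr i) f i w).
Proof.
move=> mf; elim: s => [|a s IH].
  by under eq_fun do rewrite big_nil; exact: measurable_cst.
under eq_fun do rewrite big_cons.
by case: (Pr a) => //; exact: measurable_maxr.
Qed.

Lemma bigmax_blocks_powR_le (R : realType) (d p : nat) (U : 'I_d -> R)
  (blk : 'I_d -> 'I_p) (lam : 'I_p -> R) (r : R) :
  (forall i, 0 <= U i) -> (forall j, 0 < lam j) -> 0 <= r ->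
  (\big[Num.max/0]_(j < p) (\big[Num.max/0]_(i < d | blk i == j) U i) `^ lam j <= r)
  <-> (forall i, U i <= r `^ (lam (blk i))^-1).
Proof.
move=> U0 lam0 r0; split.
- move=> /bigmax_leP[_ Zr] i; have := Zr (blk i) isT.
  by rewrite powR_le_powRV ?bigmax_ge0// => /bigmax_leP[_]; apply; rewrite eqxx.
- move=> Ur; apply/bigmax_leP; split => // j _.
  rewrite powR_le_powRV ?bigmax_ge0//; apply/bigmax_leP; split; first exact: powR_ge0.
  by move=> i /eqP <-.
Qed.

Lemma eq0_le_powR (R : realType) (a L : R) : 0 < L -> 0 <= a <= 1 ->
  (forall r, 0 < r < 1 -> a <= r `^ L) -> a = 0.
Proof.
move=> L0 /andP[a0 a1] a_le; apply/le_anti; rewrite a0 andbT leNgt; apply/negP => apos.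
have a2 : 0 < a / 2 by rewrite divr_gt0.
have r0 : 0 < (a / 2) `^ L^-1 by rewrite powR_gt0.
have r1 : (a / 2) `^ L^-1 < 1.
  have := @gt0_ltr_powR R L^-1 _ (a / 2) 1; rewrite powR1 invr_gt0 L0.
  by apply; rewrite ?nnegrE ?ltW//; lra.
have := a_le _ (introT andP (conj r0 r1)).
by rewrite -powRrM mulVf ?gt_eqF// (powRr1 (ltW a2)); lra.
Qed.

Lemma continuous_powR (R : realType) (e y : R) : 0 < y ->
  {for y, continuous (fun z : R => z `^ e)}.
Proof.
move=> y0; apply/differentiable_continuous/derivable1_diffP.
by apply: derivable_powR; rewrite in_itv /= y0.
Qed.

Lemma integral01_onem_powR (R : realType) (L : R) : 0 < L ->
  (\int[lebesgue_measure]_(r in `[0%R, 1%R]) (1 - r `^ L)%:E = (L / (1 + L))%:E)%E.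
Proof.
move=> L0; have L10 : 0 < L + 1 by rewrite addr_gt0.
pose F r := r - r `^ (L + 1) / (L + 1).
have dF (x : R) : 0 < x -> is_derive x (1 : R) F (1 - x `^ L).
  move=> x0; have := is_deriveB (is_derive_id x 1)
    (is_deriveZ (L + 1)^-1 (is_derive1_powR (L + 1) x0)).
  have -> : id - (L + 1)^-1 \*: (@powR R ^~ (L + 1)) = F.
    by apply/funext => r; rewrite /F /= mulrC.
  move/is_derive_eq; apply; rewrite addrK; congr (_ - _).
  by rewrite -[_ *: _]/((L + 1)^-1 * ((L + 1) * x `^ L)) mulrA mulVf ?gt_eqF// mul1r.
rewrite (@continuous_FTC2 _ _ F)//=.
- rewrite /F !powR1 powR0 ?gt_eqF// mul0r subr0 oppr0 adde0 mul1r; congr (_%:E).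
  by field; rewrite addrC gt_eqF.
- apply/continuous_within_itvP => //; split.
  + move=> x; rewrite in_itv /= => /andP[x0 _].
    by apply: cvgB; [exact: cvg_cst | exact: continuous_powR].
  + rewrite powR0 ?gt_eqF// subr0 -[X in _ --> X]subr0.
    by apply: cvgB; [exact: cvg_cst | exact: powR_cvg0].
  + apply: cvg_at_left_filter.
    by apply: cvgB; [exact: cvg_cst | exact: continuous_powR].
- split.
  + by move=> x; rewrite in_itv /= => /andP[x0 _]; have [] := dF x x0.
  + rewrite /F powR0 ?gt_eqF// mul0r subr0 -[X in _ --> X]subr0.
    apply: cvgB; first exact/cvg_at_right_filter/cvg_id.
    rewrite -[X in _ --> X](mul0r (L + 1)^-1).
    by apply: cvgM; [exact: powR_cvg0 | exact: cvg_cst].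
  + apply: cvg_at_left_filter; apply: cvgB; first exact: cvg_id.
    by apply: cvgM; [exact: continuous_powR | exact: cvg_cst].
- by move=> x; rewrite in_itv /= => /andP[x0 _]; rewrite derive1E; have [_ ->] := dF x x0.
Qed.

Lemma expectation_powR_cdf d (T : measurableType d) (R : realType)
  (P : probability T R) (Z : {RV P >-> R}) (L : R) : 0 < L ->
  (forall w, 0 <= Z w <= 1) ->
  (forall r, 0 < r < 1 -> P [set w | Z w <= r] = (r `^ L)%:E) ->
  ('E_P[Z] = (L / (1 + L))%:E)%E.
Proof.
move=> L0 Z01 cdfZ.
have cdfZ_ge1 r : 1 <= r -> P [set w | Z w <= r] = 1%E.
  move=> r1; rewrite -(probability_setT P); congr (P _); apply/seteqP; split => w // _ /=.
  by have /andP[_ /le_trans] := Z01 w; apply.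
have cdfZ0 : P [set w | Z w <= 0] = 0%E.
  rewrite marg_cdfE; congr (_%:E); apply: (eq0_le_powR L0).
    by rewrite marg_cdf_ge0 marg_cdf_le1.
  move=> r /andP[r0 r1]; rewrite -lee_fin -cdfZ ?r0// marg_cdfE lee_fin.
  exact/marg_cdf_nondecreasing/ltW.
have ccdfE r : ccdf Z r = (1 - P [set w | (Z w <= r)%R])%E.
  rewrite ccdf_1_cdf /cdf /distribution /pushforward /=.
  by congr (_ - P _)%E; apply/seteqP; split => w /=; rewrite in_itv.
rewrite ge0_expectation_ccdf; last by move=> w; have /andP[] := Z01 w.
have -> : `[0%R, +oo[%classic = `[0%R, 1%R]%classic `|` `]1%R, +oo[%classic :> set R.
  apply/seteqP; split => x /=; rewrite !in_itv /= ?andbT.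
  - by move=> x0; have [x1|x1] := leP x 1; [left|right]; rewrite ?x0 ?x1.
  - by case=> [/andP[]//|/ltW/(le_trans ler01)].
rewrite ge0_integral_setU //; last 2 first.
- exact: measurable_funTS (ccdf_measurable Z).
- rewrite disj_set2E; apply/eqP/seteqP; split => x // [] /=; rewrite !in_itv /=.
  by move=> /andP[_ x1]; rewrite andbT => /(le_lt_trans x1); rewrite ltxx.
rewrite [X in (_ + X)%E]integral0_eq ?adde0; last first.
  by move=> x /=; rewrite in_itv /= andbT => x1; rewrite ccdfE cdfZ_ge1 ?subee ?ltW.
rewrite -(integral01_onem_powR L0); apply: eq_integral => x.
rewrite inE /= in_itv /= => /andP[x0 x1]; rewrite ccdfE.
have [->|xn0] := eqVneq x 0; first by rewrite cdfZ0 powR0 ?gt_eqF// subr0 sube0.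
have [->|xn1] := eqVneq x 1; first by rewrite cdfZ_ge1// powR1 subrr subee.
by rewrite cdfZ ?EFinB// !lt_neqAle eq_sym xn0 x0 xn1 x1.
Qed.

Definition block_max_powR {dT} {T : measurableType dT} {R : realType}
  (P : probability T R) (n p : nat) (X : 'I_n -> T -> R) (blk : 'I_n -> 'I_p)
  (lam : 'I_p -> R) (w : T) : R :=
  \big[Num.max/0]_(j < p) (Mblock P X blk j w) `^ lam j.

Section frechet_margins.
Context d (T : measurableType d) (R : realType) (P : probability T R).
Variables (n : nat) (X : 'I_n -> {RV P >-> R}) (sigma : 'I_n -> R) (eta : R).
Hypotheses (n_gt0 : (0 < n)%N) (eta_gt0 : 0 < eta) (sigma_gt0 : forall i, 0 < sigma i).
Hypothesis marg_frechet : forall (i : 'I_n) (t : R), 0 < t ->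
  marg_cdf P (fun w => X i w) t = expR (- (sigma i * t `^ (- eta^-1))).
Hypothesis ell_homogeneous : forall (s : R) (t : 'I_n -> R), 0 < s -> (forall i, 0 < t i) ->
  ell P (fun i w => X i w) (fun i => s * t i) = s `^ (- eta^-1) * ell P (fun i w => X i w) t.

Lemma joint_cdf_lt1 (t : 'I_n -> R) : (forall i, 0 < t i) ->
  joint_cdf P (fun i w => X i w) t < 1.
Proof.
move=> t_gt0; apply: (le_lt_trans (joint_cdf_le_marg X t (Ordinal n_gt0))).
by rewrite marg_frechet// expR_lt1 oppr_lt0 mulr_gt0// powR_gt0.
Qed.

(* With [c_i = sigma_i t_i ^ (-1/eta)], [S = \sum_i c_i] and [s = (S + 1) ^ eta], each tail
   [1 - F_i (s t_i) = 1 - exp (- c_i / (S + 1))] is at most [c_i / (S + 1)], so the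
   Bonferroni bound is positive. *)
Lemma joint_cdf_scaled_gt0 (t : 'I_n -> R) : (forall i, 0 < t i) ->
  exists2 s : R, 0 < s & 0 < joint_cdf P (fun i w => X i w) (fun i => s * t i).
Proof.
move=> t_gt0; pose S := \sum_(i < n) sigma i * t i `^ (- eta^-1).
have S_ge0 : 0 <= S by rewrite sumr_ge0// => i _; rewrite mulr_ge0 ?powR_ge0 ?ltW.
have S1_gt0 : 0 < S + 1 by rewrite ltr_wpDl.
exists ((S + 1) `^ eta); first by rewrite powR_gt0.
apply: lt_le_trans (joint_cdf_ge_bonferroni X _).
have tails : \sum_(i < n) (1 - marg_cdf P (fun w => X i w) ((S + 1) `^ eta * t i))
    <= S / (S + 1).
  rewrite /S mulr_suml; apply: ler_sum => i _.
  rewrite marg_frechet ?mulr_gt0 ?powR_gt0// (powRM _ (powR_ge0 _ _) (ltW (t_gt0 i))).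
  rewrite powR_powRN_inv// mulrCA mulrC.
  by have := expR_ge1Dx (- ((sigma i * t i `^ (- eta^-1)) / (S + 1))); lra.
rewrite subr_gt0 (le_lt_trans tails)// ltr_pdivrMr// mul1r; lra.
Qed.

(* If [joint_cdf t] were [0] then [ell t = - ln 0 = 0], and homogeneity would make
   [ell (s t)] vanish too, contradicting [0 < joint_cdf (s t) < 1]. *)
Lemma joint_cdf_gt0 (t : 'I_n -> R) : (forall i, 0 < t i) ->
  0 < joint_cdf P (fun i w => X i w) t.
Proof.
move=> t_gt0; have [s s_gt0 Fst_gt0] := joint_cdf_scaled_gt0 t_gt0.
have st_gt0 i : 0 < s * t i by rewrite mulr_gt0.
have : 0 < ell P (fun i w => X i w) (fun i => s * t i).
  by rewrite /ell oppr_gt0 ln_lt0// Fst_gt0 joint_cdf_lt1.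
rewrite ell_homogeneous// pmulr_rgt0 ?powR_gt0// /ell oppr_gt0.
apply: contraTT; rewrite -leNgt => F_le0.
by rewrite ln0 ?ltxx// eq_le F_le0 joint_cdf_ge0.
Qed.

Lemma joint_cdfE_ell (t : 'I_n -> R) : (forall i, 0 < t i) ->
  joint_cdf P (fun i w => X i w) t = expR (- ell P (fun i w => X i w) t).
Proof. by move=> t_gt0; rewrite /ell opprK lnK// posrE joint_cdf_gt0. Qed.

Lemma ell_gt0 (t : 'I_n -> R) : (forall i, 0 < t i) -> 0 < ell P (fun i w => X i w) t.
Proof. by move=> t_gt0; rewrite /ell oppr_gt0 ln_lt0// joint_cdf_gt0// joint_cdf_lt1. Qed.

Variables (p : nat) (blk : 'I_n -> 'I_p) (lam : 'I_p -> R).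
Hypothesis lam_gt0 : forall j, 0 < lam j.

Lemma block_max_powR_le (w : T) (r : R) : 0 <= r ->
  block_max_powR P (fun i w => X i w) blk lam w <= r <->
  (forall i, marg_cdf P (fun w => X i w) (X i w) <= r `^ (lam (blk i))^-1).
Proof. by move=> r_ge0; apply: bigmax_blocks_powR_le => // i; exact: marg_cdf_ge0. Qed.

Lemma block_max_powR_ge0_le1 (w : T) :
  0 <= block_max_powR P (fun i w => X i w) blk lam w <= 1.
Proof.
rewrite bigmax_ge0; apply/(block_max_powR_le w ler01) => i.
by rewrite powR1; exact: marg_cdf_le1.
Qed.

Lemma measurable_block_max_powR :
  measurable_fun setT (block_max_powR P (fun i w => X i w) blk lam).
Proof.
apply: measurable_bigmax => j; apply: measurableT_comp (measurable_powR _) _.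
by apply: measurable_bigmax => i; exact: measurable_marg_cdf_RV.
Qed.

Let tau i := sigma i `^ eta * \sum_(j < p) lam j `^ eta * (blk i == j)%:R.

Lemma probability_block_max_powR_le (r : R) : 0 < r < 1 ->
  P [set w | block_max_powR P (fun i w => X i w) blk lam w <= r]
  = (r `^ ell P (fun i w => X i w) tau)%:E.
Proof.
move=> /andP[r_gt0 r_lt1]; have lnr_gt0 : 0 < - ln r by rewrite oppr_gt0 ln_lt0 ?r_gt0.
have tau_gt0 i : 0 < tau i by rewrite /tau sum_indicator mulr_gt0 ?powR_gt0.
pose t i := (- ln r) `^ (- eta) * tau i.
have t_gt0 i : 0 < t i by rewrite mulr_gt0 ?powR_gt0.
have Ft i : marg_cdf P (fun w => X i w) (t i) = r `^ (lam (blk i))^-1.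
  by rewrite marg_frechet// /t /tau sum_indicator frechet_cdf_at_scaled ?r_gt0.
have Fle i x : (marg_cdf P (fun w => X i w) x <= r `^ (lam (blk i))^-1) = (x <= t i).
  rewrite -Ft; apply: frechet_cdf_le (sigma_gt0 i) eta_gt0 (t_gt0 i) _ (marg_frechet i).
  exact: marg_cdf_nondecreasing.
rewrite (_ : [set w | _] = [set w | forall i, X i w <= t i]); last first.
  apply/seteqP; split => w /=.
  - by move=> /(block_max_powR_le w (ltW r_gt0)) le_r i; rewrite -Fle.
  - by move=> le_t; apply/(block_max_powR_le w (ltW r_gt0)) => i; rewrite Fle.
rewrite joint_cdfE joint_cdfE_ell// /t ell_homogeneous ?powR_gt0//.
rewrite (powRN_powRN_inv lnr_gt0 eta_gt0).
by rewrite /powR gt_eqF// mulNr opprK mulrC.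
Qed.

End frechet_margins.

Theorem lemma2 (dT : measure_display) (T : measurableType dT) (R : realType)
  (P : probability T R) (d p : nat) (X : 'I_d -> {RV P >-> R})
  (sigma : 'I_d -> R) (eta : R) (blk : 'I_d -> 'I_p) :
  (0 < d)%N ->
  (forall j : 'I_p, exists i : 'I_d, blk i = j) ->
  (forall i k : 'I_d, (i <= k)%N -> (blk i <= blk k)%N) ->
  0 < eta -> eta <= 1 ->
  (forall i, 0 < sigma i) ->
  (forall (i : 'I_d) (t : R), 0 < t ->
     marg_cdf P (fun w => X i w) t = expR (- (sigma i * t `^ (- eta^-1)))) ->
  (forall (s : R) (t : 'I_d -> R), 0 < s -> (forall i, 0 < t i) ->
     ell P (fun i w => X i w) (fun i => s * t i)
       = s `^ (- eta^-1) * ell P (fun i w => X i w) t) ->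
  forall lam : 'I_p -> R, (forall j, 0 < lam j) ->
  let L := ell P (fun i w => X i w)
             (fun i => sigma i `^ eta *
                       \sum_(j < p) lam j `^ eta * (blk i == j)%:R) in
  ('E_P[fun w => (\big[Num.max/0]_(j < p)
                    (Mblock P (fun i w => X i w) blk j w) `^ lam j)%R]
   = (L / (1 + L))%:E)%E.
Proof.
move=> d_gt0 _ _ eta_gt0 _ sigma_gt0 marg_frechet ell_homogeneous lam lam_gt0 L.
pose Z : {RV P >-> R} := HB.pack (block_max_powR P (fun i w => X i w) blk lam)
  (isMeasurableFun.Build _ _ _ _ _ (measurable_block_max_powR X blk lam)).
change ('E_P[Z] = (L / (1 + L))%:E)%E.
apply: expectation_powR_cdf.
- apply: (ell_gt0 d_gt0 eta_gt0 sigma_gt0 marg_frechet ell_homogeneous) => i.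
  by rewrite sum_indicator mulr_gt0 ?powR_gt0.
- exact: block_max_powR_ge0_le1.
- exact: (probability_block_max_powR_le d_gt0 eta_gt0 sigma_gt0 marg_frechet ell_homogeneous).
Qed.
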